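(* Let $m^*$ be the exact model of the environment and let $m\in\mathcal{M}$ be any model. Fix a base policy $\pi^b$, and let $\pi_m^r$ be the rollout policy and $\pi_m^{ce}$ the certainty-equivalence policy obtained from $\pi^b$ in $m$. Suppose $m$ is a performance-resembling model (PRM) of $m^*$ with respect to $\Pi=\{\pi_m^r,\pi_m^{ce}\}$ and $J$. Then $J_{m^*}^{\pi_m^{ce}}\ge J_{m^*}^{\pi_m^{r}}$.
   Context: Fix finite sets $\mathcal{S}$ (states) and $\mathcal{A}$ (actions) and a discount factor $\gamma\in[0,1)$. A model is a triple $m=(p,r,d)$ with transition kernel $p:\mathcal{S}\times\mathcal{A}\times\mathcal{S}\to[0,1]$, reward function $r:\mathcal{S}\times\mathcal{A}\times\mathcal{S}\to\mathbb{R}$ and initial state distribution $d$ on $\mathcal{S}$; $\mathcal{M}$ is the set of all such models, and $m^*\in\mathcal{M}$ denotes the exact model of the environment. A policy is a map $\pi:\mathcal{S}\times\mathcal{A}\to[0,1]$ giving a distribution over actions at each state; $\mathbb{\Pi}$ is the set of all policies. For $m=(p,r,d)$ and $\pi\in\mathbb{\Pi}$, the performance is $J_m^\pi=\mathbb{E}_{\pi,p}[\sum_{t=0}^\infty\gamma^t r(S_t,A_t,S_{t+1})\mid S_0\sim d]$. Given a base policy $\pi^b$ and a model $m$, the rollout policy $\pi_m^r$ is the policy obtained by one step of policy iteration on $\pi^b$ in $m$ (policy evaluation of $\pi^b$ in $m$ followed by greedy policy improvement), and the certainty-equivalence policy $\pi_m^{ce}$ is the policy obtained by running policy iteration or value iteration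 to convergence in $m$ starting from $\pi^b$ (an optimal policy of $m$). Given $\Pi\subseteq\mathbb{\Pi}$, a model $m$ is a performance-resembling model (PRM) of $m^*$ w.r.t. $\Pi$ and $J$ if for all $\pi^i,\pi^j\in\Pi$, $J_m^{\pi^i}\ge J_m^{\pi^j}$ implies $J_{m^*}^{\pi^i}\ge J_{m^*}^{\pi^j}$. *)

From HB Require Import structures.
From mathcomp Require Import all_boot all_order all_algebra.
From mathcomp Require Import all_classical all_reals.
From mathcomp Require Import topology normedtype sequences.

Set Implicit Arguments.
Unset Strict Implicit.
Unset Printing Implicit Defensive.

Import Order.TTheory GRing.Theory Num.Theory.
Import numFieldNormedType.Exports.
Local Open Scope classical_set_scope.
Local Open Scope ring_scope.

Section MDP.
Variables (R : realType) (S A : finType).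

Record model := Model {
  mp : S -> A -> S -> R;
  mr : S -> A -> S -> R;
  md : S -> R              (* initial state distribution *)
}.

Definition valid_model (m : model) : Prop :=
  (forall s a s', 0 <= mp m s a s' <= 1) /\
  (forall s a, \sum_(s' : S) mp m s a s' = 1) /\
  (forall s, 0 <= md m s) /\ (\sum_(s : S) md m s = 1).

Definition policy := S -> A -> R.

Definition valid_policy (pi : policy) : Prop :=
  (forall s a, 0 <= pi s a <= 1) /\ (forall s, \sum_(a : A) pi s a = 1).

Fixpoint state_dist (m : model) (pi : policy) (d0 : S -> R) (t : nat) : S -> R :=
  match t with
  | 0%N => d0
  | t'.+1 => fun s' =>
      \sum_(s : S) \sum_(a : A)
        state_dist m pi d0 t' s * pi s a * mp m s a s'
  end.

Definition exp_reward (m : model) (pi : policy) (d0 : S -> R) (t : nat) : R :=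
  \sum_(s : S) \sum_(a : A) \sum_(s' : S)
    state_dist m pi d0 t s * pi s a * mp m s a s' * mr m s a s'.

(* E_{pi,p}[ sum_t gamma^t r(S_t,A_t,S_{t+1}) | S_0 ~ d0 ]
   (expectation exchanged with the absolutely convergent series). *)
Definition disc_return (gamma : R) (m : model) (pi : policy) (d0 : S -> R) : R :=
  limn (series (fun t : nat => gamma ^+ t * exp_reward m pi d0 t)).

Definition J (gamma : R) (m : model) (pi : policy) : R :=
  disc_return gamma m pi (md m).

Definition delta_at (s : S) : S -> R := fun s0 => if s0 == s then 1 else 0.

Definition V (gamma : R) (m : model) (pi : policy) (s : S) : R :=
  disc_return gamma m pi (delta_at s).

Definition Q (gamma : R) (m : model) (pi : policy) (s : S) (a : A) : R :=
  \sum_(s' : S) mp m s a s' * (mr m s a s' + gamma * V gamma m pi s').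

Definition greedy_wrt (q : S -> A -> R) (pi' : policy) : Prop :=
  forall s a, 0 < pi' s a -> forall a', q s a' <= q s a.

Definition is_rollout (gamma : R) (m : model) (pib pir : policy) : Prop :=
  valid_policy pir /\ greedy_wrt (Q gamma m pib) pir.

Definition is_optimal (gamma : R) (m : model) (pi : policy) : Prop :=
  valid_policy pi /\
  forall pi', valid_policy pi' -> forall s, V gamma m pi' s <= V gamma m pi s.

Definition PRM (gamma : R) (m mstar : model) (Pi : set policy) : Prop :=
  forall pii pij, Pi pii -> Pi pij ->
    J gamma m pij <= J gamma m pii -> J gamma mstar pij <= J gamma mstar pii.

End MDP.

From HB Require Import structures.
From mathcomp Require Import all_boot all_order all_algebra.
From mathcomp Require Import all_classical all_reals.
From mathcomp Require Import topology normedtype sequences.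
Import Order.TTheory GRing.Theory Num.Theory.
Import numFieldNormedType.Exports.
Local Open Scope classical_set_scope.
Local Open Scope ring_scope.

(* The performance J_m^pi is the average of the state values V_m^pi under the
   initial distribution of m, so a policy whose values dominate statewise also
   dominates in J_m.  An optimal policy of m dominates every valid policy, in
   particular the rollout policy, and the
   PRM property transfers this ordering from m to m*. *)

Section DiscountedReturn.
Variables (R : realType) (S A : finType).
Implicit Types (m : model R S A) (pi : policy R S A) (d : S -> R).

Definition prob_dist d := (forall s, 0 <= d s) /\ \sum_s d s = 1.

Lemma delta_at_prob (s0 : S) : prob_dist (@delta_at R S s0).
Proof.
split=> [s|]; first by rewrite /delta_at; case: eqP.
by rewrite (bigD1 s0) //= /delta_at eqxx big1 ?addr0 // => s /negbTE ->.
Qed.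

Lemma prob_dist_le1 d (s : S) : prob_dist d -> d s <= 1.
Proof.
by move=> [d_ge0 <-]; rewrite (bigD1 s) //= lerDl sumr_ge0.
Qed.

Lemma state_dist_prob m pi d (t : nat) :
  valid_model m -> valid_policy pi -> prob_dist d ->
  prob_dist (state_dist m pi d t).
Proof.
move=> [p01 [p_sum1 _]] [pi01 pi_sum1] d_prob.
elim: t => [|t [sd_ge0 sd_sum1]] //=; split.
  move=> s'; apply: sumr_ge0 => s _; apply: sumr_ge0 => a _.
  have /andP[pi_ge0 _] := pi01 s a; have /andP[p_ge0 _] := p01 s a s'.
  by rewrite !mulr_ge0.
rewrite exchange_big /= -sd_sum1; apply: eq_bigr => s _.
rewrite exchange_big /= -[RHS]mulr1 -(pi_sum1 s) mulr_sumr.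
by apply: eq_bigr => a _; rewrite -mulr_sumr p_sum1 mulr1.
Qed.

Lemma state_dist_linear m pi d t s' :
  state_dist m pi d t s' =
  \sum_(s0 : S) d s0 * state_dist m pi (@delta_at R S s0) t s'.
Proof.
elim: t s' => [|t IH] s' /=.
  rewrite (bigD1 s') //= /delta_at eqxx mulr1 big1 ?addr0 // => s.
  by rewrite eq_sym => /negbTE ->; rewrite mulr0.
under eq_bigr do under eq_bigr do rewrite IH !mulr_suml.
under [RHS]eq_bigr do rewrite mulr_sumr.
under [RHS]eq_bigr do under eq_bigr do rewrite mulr_sumr.
rewrite [RHS]exchange_big /=; apply: eq_bigr => s _.
rewrite [RHS]exchange_big /=; apply: eq_bigr => a _; apply: eq_bigr => s0 _.
by rewrite !mulrA.
Qed.

Lemma exp_reward_linear m pi d t :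
  exp_reward m pi d t = \sum_(s0 : S) d s0 * exp_reward m pi (@delta_at R S s0) t.
Proof.
rewrite /exp_reward.
under eq_bigr do under eq_bigr do under eq_bigr do
  rewrite state_dist_linear !mulr_suml.
under [RHS]eq_bigr do rewrite mulr_sumr.
under [RHS]eq_bigr do under eq_bigr do rewrite mulr_sumr.
under [RHS]eq_bigr do under eq_bigr do under eq_bigr do rewrite mulr_sumr.
rewrite [RHS]exchange_big /=; apply: eq_bigr => s _.
rewrite [RHS]exchange_big /=; apply: eq_bigr => a _.
rewrite [RHS]exchange_big /=; apply: eq_bigr => s' _; apply: eq_bigr => s0 _.
by rewrite !mulrA.
Qed.

Lemma norm_exp_reward_le m pi d t :
  valid_model m -> valid_policy pi -> prob_dist d ->
  `|exp_reward m pi d t| <= \sum_s \sum_a \sum_s' `|mr m s a s'|.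
Proof.
move=> m_valid pi_valid d_prob.
have sd_prob := state_dist_prob _ _ _ t m_valid pi_valid d_prob.
have [[p01 _] [pi01 _]] := (m_valid, pi_valid).
rewrite /exp_reward; apply: (le_trans (ler_norm_sum _ _ _)).
apply: ler_sum => s _; apply: (le_trans (ler_norm_sum _ _ _)).
apply: ler_sum => a _; apply: (le_trans (ler_norm_sum _ _ _)).
apply: ler_sum => s' _.
have sd_le1 := prob_dist_le1 _ s sd_prob.
have sd_ge0 := sd_prob.1 s.
have /andP[pi_ge0 pi_le1] := pi01 s a; have /andP[p_ge0 p_le1] := p01 s a s'.
rewrite normrM ger0_norm ?mulr_ge0 //.
by rewrite ler_piMl // -[1]mulr1 ler_pM ?mulr_ge0 // -[1]mulr1 ler_pM.
Qed.

Lemma disc_return_cvg (gamma : R) m pi d :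
  0 <= gamma < 1 -> valid_model m -> valid_policy pi -> prob_dist d ->
  cvgn (series (fun t => gamma ^+ t * exp_reward m pi d t)).
Proof.
move=> /andP[gamma_ge0 gamma_lt1] m_valid pi_valid d_prob; apply: normed_cvg.
set M := \sum_s \sum_a \sum_s' `|mr m s a s'|.
have M_ge0 : 0 <= M by do 3 (apply: sumr_ge0 => ? _).
apply: (@series_le_cvg _ _ (geometric M gamma)) => [n|n|n|] /=.
- exact: normr_ge0.
- by rewrite mulr_ge0 ?exprn_ge0.
- rewrite normrM ger0_norm ?exprn_ge0 // mulrC.
  by rewrite ler_wpM2r ?exprn_ge0 ?norm_exp_reward_le.
- by apply: is_cvg_geometric_series; rewrite ger0_norm.
Qed.

Lemma disc_return_linear (gamma : R) m pi d :
  0 <= gamma < 1 -> valid_model m -> valid_policy pi ->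
  disc_return gamma m pi d = \sum_(s0 : S) d s0 * V gamma m pi s0.
Proof.
move=> gamma01 m_valid pi_valid; rewrite /disc_return /V /disc_return.
set u := fun s0 => series (fun t => gamma ^+ t * exp_reward m pi (@delta_at R S s0) t).
have -> : series (fun t => gamma ^+ t * exp_reward m pi d t) =
          (fun n => \sum_(s0 : S) d s0 * u s0 n).
  apply/funext => n; rewrite /u /series /=.
  under eq_bigr do rewrite exp_reward_linear mulr_sumr.
  rewrite exchange_big /=; apply: eq_bigr => s0 _; rewrite mulr_sumr.
  by apply: eq_bigr => k _; rewrite !mulrA (mulrC (gamma ^+ k)).
apply: cvg_lim => //; apply: cvg_big => [|s0 _]; first exact: add_continuous.
apply: cvgM; first exact: cvg_cst.
by apply: disc_return_cvg => //; apply: delta_at_prob.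
Qed.

Lemma J_le_of_V_le (gamma : R) m pi pi' :
  0 <= gamma < 1 -> valid_model m -> valid_policy pi -> valid_policy pi' ->
  (forall s, V gamma m pi s <= V gamma m pi' s) ->
  J gamma m pi <= J gamma m pi'.
Proof.
move=> gamma01 m_valid pi_valid pi'_valid le_V.
rewrite /J !disc_return_linear //; apply: ler_sum => s _.
have [_ [_ [md_ge0 _]]] := m_valid.
by rewrite ler_wpM2l.
Qed.

End DiscountedReturn.

Theorem proposition2 (R : realType) (S A : finType) (gamma : R)
  (mstar m : model R S A) (pib pir pice : policy R S A) :
  0 <= gamma < 1 ->
  valid_model mstar -> valid_model m ->
  valid_policy pib ->
  is_rollout gamma m pib pir ->
  is_optimal gamma m pice ->
  PRM gamma m mstar [set pir; pice] ->
  J gamma mstar pir <= J gamma mstar pice.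
Proof.
move=> gamma01 _ m_valid _ [pir_valid _] [pice_valid pice_opt] prm.
apply: prm; [by right | by left |].
exact: J_le_of_V_le (pice_opt _ pir_valid).
Qed.
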